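(* Let $G$ be a finite group and $H$ a normal subgroup of $G$ with $|H|$ odd. Then $\Gamma_{G,H}$ admits a perfect code.
   Context: For a normal subgroup $H$ of a finite group $G$ with identity $e$, the subgroup sum graph $\Gamma_{G,H}$ is the simple undirected graph with vertex set $G$ in which distinct vertices $x,y$ are adjacent if and only if $xy\in H\setminus\{e\}$. A perfect code in a graph is a set $C$ of vertices that is independent and such that every vertex not in $C$ is adjacent to exactly one vertex of $C$. *)

From mathcomp Require Import all_boot all_fingroup.
Set Implicit Arguments. Unset Strict Implicit. Unset Printing Implicit Defensive.
Local Open Scope group_scope.

(* Subgroup sum graph Gamma_{G,H}: vertex set G; distinct x, y adjacent iff
   x * y \in H \ {1}.  G, H are groups inside an ambient finGroupType gT. *)
Definition ssg_adj (gT : finGroupType) (H : {set gT}) (x y : gT) : bool :=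
  (x != y) && (x * y \in H^#).

Definition ssg_perfect_code (gT : finGroupType) (G H C : {set gT}) : Prop :=
  [/\ C \subset G,
      (forall x y, x \in C -> y \in C -> ~~ ssg_adj H x y) &
      (forall x, x \in G -> x \notin C ->
         #|[set c in C | ssg_adj H x c]| = 1)%N].

(* Call the set [H x ∪ H x^-1] the pair class of x.  When H is normal these
   sets partition G, and for x in G the neighbours of x are exactly the
   elements of [H x^-1 \ {x, x^-1}].  Choose a representative r of each pair
   class, an involution whenever the class contains one, and put r and r^-1
   into the code.  If r and r^-1 fall into the same coset then r^2 lies in H,
   and because |H| is odd the coset H r contains an involution, so r = r^-1;
   hence each coset of a pair class meets the code exactly once, which gives
   both independence and perfect domination. *)

From mathcomp Require Import all_boot all_fingroup.
Set Implicit Arguments. Unset Strict Implicit. Unset Printing Implicit Defensive.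
Local Open Scope group_scope.

Section RcosetInvolution.
Variables (gT : finGroupType) (H : {group gT}).

Lemma rcoset_involution x :
  odd #|H| -> x ^+ 2 \in H -> exists2 d, d \in H :* x & d ^+ 2 = 1.
Proof.
move=> oddH x2H; pose o := #[x ^+ 2].
have odd_o : odd o by apply: dvdn_odd oddH; rewrite cardSg ?cycle_subG.
exists (x ^+ o); last by rewrite -expgM mulnC expgM expg_order.
rewrite mem_rcoset -(odd_double_half o) odd_o add1n expgSr mulgK -mul2n expgM.
exact: groupX.
Qed.

End RcosetInvolution.

Section ClassRepresentative.
Variable gT : finGroupType.

Definition class_rep (A : {set gT}) : gT :=
  if [pick d in A | d ^+ 2 == 1] is Some d then d else repr A.

Lemma class_rep_mem (A : {set gT}) x : x \in A -> class_rep A \in A.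
Proof.
move=> Ax; rewrite /class_rep.
by case: pickP => [d /andP[] | _]; last exact: mem_repr Ax.
Qed.

Lemma class_rep_involution (A : {set gT}) x :
  x \in A -> x ^+ 2 = 1 -> class_rep A ^+ 2 = 1.
Proof.
move=> Ax x2; rewrite /class_rep; case: pickP => [d /andP[_ /eqP] // | noinv].
by have := noinv x; rewrite /= Ax x2 eqxx.
Qed.

End ClassRepresentative.

Section PairClasses.
Variables (gT : finGroupType) (H : {group gT}).

Lemma mem_mulgC x y : x \in 'N(H) -> (x * y \in H) = (y * x \in H).
Proof. by move=> nHx; rewrite -(memJ_norm (x * y) nHx) conjgE mulgA mulKg. Qed.

Lemma mem_mulg_rcosetV x y : x \in 'N(H) -> (x * y \in H) = (y \in H :* x^-1).
Proof. by move=> nHx; rewrite mem_rcoset invgK mem_mulgC. Qed.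

Lemma mem_rcosetV x y : x \in 'N(H) -> (y^-1 \in H :* x) = (y \in H :* x^-1).
Proof. by move=> nHx; rewrite mem_rcoset -invMg groupV mem_mulg_rcosetV. Qed.

Definition pair_class x : {set gT} := H :* x :|: H :* x^-1.

Lemma pair_class_refl x : x \in pair_class x.
Proof. by rewrite inE rcoset_refl. Qed.

Lemma pair_class_rcosetV x c : c \in H :* x^-1 -> c \in pair_class x.
Proof. by rewrite inE orbC => ->. Qed.

Lemma pair_class_rcoset x y d :
  y \in pair_class x -> d \in H :* y -> d \in pair_class x.
Proof. by rewrite !inE => /orP[] yH dHy; rewrite (rcoset_trans dHy yH) ?orbT. Qed.

Lemma pair_class_eq x y :
  x \in 'N(H) -> y \in pair_class x -> pair_class y = pair_class x.
Proof.
move=> nHx; rewrite inE /pair_class => /orP[] yH.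
  have yVH : y^-1 \in H :* x^-1 by rewrite -mem_rcosetV ?invgK.
  by rewrite (rcoset_eqP yH) (rcoset_eqP yVH).
have yVH : y^-1 \in H :* x by rewrite mem_rcosetV.
by rewrite setUC (rcoset_eqP yH) (rcoset_eqP yVH).
Qed.

Definition pair_rep x := class_rep (pair_class x).

Definition rep_pair x : {set gT} := [set pair_rep x; (pair_rep x)^-1].

Lemma pair_rep_mem x : pair_rep x \in pair_class x.
Proof. exact: class_rep_mem (pair_class_refl x). Qed.

Lemma rep_pair_eq x y :
  x \in 'N(H) -> y \in pair_class x -> rep_pair y = rep_pair x.
Proof. by move=> nHx /(pair_class_eq nHx) Exy; rewrite /rep_pair /pair_rep Exy. Qed.

Lemma rep_pairV x c : (c^-1 \in rep_pair x) = (c \in rep_pair x).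
Proof. by rewrite !inE !eq_invg_sym invgK orbC. Qed.

Hypothesis oddH : odd #|H|.

Lemma pair_rep_sqr x : pair_rep x ^+ 2 \in H -> pair_rep x ^+ 2 = 1.
Proof.
case/(rcoset_involution oddH) => d dH d2.
exact: class_rep_involution (pair_class_rcoset (pair_rep_mem x) dH) d2.
Qed.

Lemma card_rep_pair_rcoset x y :
  x \in 'N(H) -> y \in pair_class x -> #|rep_pair x :&: H :* y| = 1%N.
Proof.
move=> nHx yx; set r := pair_rep x.
have {yx} : y \in pair_class r by rewrite (pair_class_eq nHx (pair_rep_mem x)).
have rV_sym : r^-1 \in H :* r -> r^-1 = r.
  rewrite mem_rcoset -invMg groupV -expg2 => /pair_rep_sqr r2.
  by apply/eqP; rewrite eq_invg_mul -expg2 r2.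
rewrite inE => /orP[] yH; rewrite rcoset_sym in yH.
  rewrite (_ : _ :&: _ = [set r]) ?cards1 //; apply/setP=> c; rewrite !inE.
  apply/andP/eqP=> [[/orP[] /eqP-> // cHy] | ->]; last by rewrite eqxx.
  by apply: rV_sym; rewrite (rcoset_trans cHy) // rcoset_sym.
rewrite (_ : _ :&: _ = [set r^-1]) ?cards1 //; apply/setP=> c; rewrite !inE.
apply/andP/eqP=> [[/orP[] /eqP-> // cHy] | ->]; last by rewrite eqxx orbT.
by rewrite rV_sym // (rcoset_trans yH) // rcoset_sym.
Qed.

Variable G : {group gT}.
Hypothesis nsHG : H <| G.

Definition pair_code : {set gT} := [set c in G | c \in rep_pair c].

Lemma normG x : x \in G -> x \in 'N(H).
Proof. by move/(subsetP (normal_norm nsHG)). Qed.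

Lemma mem_pair_code x c :
  x \in G -> c \in G -> c \in pair_class x ->
  (c \in pair_code) = (c \in rep_pair x).
Proof. by move=> xG cG cx; rewrite inE cG (rep_pair_eq (normG xG) cx). Qed.

Lemma pair_code_independent x y :
  x \in pair_code -> y \in pair_code -> ~~ ssg_adj H x y.
Proof.
rewrite inE => /andP[xG xC] yC.
apply/negP; rewrite /ssg_adj in_setD1 => /and3P[neq_xy xy1 xyH].
have yG : y \in G by case/setIdP: yC.
have yx : y \in pair_class x.
  by rewrite pair_class_rcosetV -?mem_mulg_rcosetV ?normG.
rewrite (mem_pair_code xG yG yx) !inE in yC; rewrite !inE in xC.
by case/orP: xC neq_xy xy1 => /eqP->; case/orP: yC => /eqP->;
  rewrite ?mulgV ?mulVg ?eqxx.
Qed.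

Lemma pair_code_neighbours x :
  x \in G -> x \notin pair_code ->
  [set c in pair_code | ssg_adj H x c] = rep_pair x :&: H :* x^-1.
Proof.
move=> xG xC; have nHx := normG xG.
apply/setP=> c; rewrite in_setI inE /ssg_adj in_setD1 mem_mulg_rcosetV //.
case cHx: (c \in H :* x^-1); last by rewrite !andbF.
have cx := pair_class_rcosetV cHx.
have cG : c \in G.
  have cxH : c * x \in H by rewrite -(invgK x) -mem_rcoset.
  by rewrite -(mulgK x c) groupM ?groupV // (subsetP (normal_sub nsHG)).
rewrite -(mem_pair_code xG cG cx) andbT; case cC: (c \in pair_code) => //=.
apply/andP; split; first by apply: contraNneq xC => ->.
apply: contraNneq xC => xc1; rewrite (mem_pair_code xG xG (pair_class_refl x)).
have xE : x = c^-1 by rewrite -(mulgK c x) xc1 mul1g.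
by rewrite {1}xE rep_pairV -(mem_pair_code xG cG cx).
Qed.

End PairClasses.

Theorem corollary3p2 (gT : finGroupType) (G H : {group gT}) :
  H <| G -> odd #|H| ->
  exists C : {set gT}, ssg_perfect_code G H C.
Proof.
move=> nsHG oddH; exists (pair_code H G); split.
- by apply/subsetP=> c /setIdP[].
- exact: pair_code_independent.
move=> x xG xC; rewrite pair_code_neighbours //.
exact: card_rep_pair_rcoset (normG nsHG xG)
  (pair_class_rcosetV (rcoset_refl _ _)).
Qed.
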